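(* Let $d\ge1$ and let $(S_t)_{t\in\mathbb{R}}$ be a one-parameter group of real orthogonal linear operators on $\mathbb{R}^d\otimes\mathbb{R}^d$, with associated maps $\mathcal{S}_t(X)=S_tXS_t^{\top}$ on real $d^2\times d^2$ matrices. Suppose $\mathcal{S}_t(\rho\otimes\rho)=\rho\otimes\rho$ for every $t\in\mathbb{R}$ and every real $d\times d$ density matrix $\rho$ (real symmetric, positive semidefinite, trace one). Then $\mathcal{S}_t$ is the identity map for every $t\in\mathbb{R}$.
   Context: This concerns real quantum theory, in which states of a $d$-level system are real density matrices on $\mathbb{R}^d$ and reversible transformations are conjugations by orthogonal matrices. *)

From HB Require Import structures.
From mathcomp Require Import all_boot all_order all_algebra.
From mathcomp Require Import mxtens.
From mathcomp Require Import reals.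
Set Implicit Arguments. Unset Strict Implicit. Unset Printing Implicit Defensive.
Import Order.TTheory GRing.Theory Num.Theory.
Local Open Scope ring_scope.

Definition orthogonal_mx (R : realType) (n : nat) (S : 'M[R]_n) : Prop :=
  S *m S^T = 1%:M.

Definition density_mx (R : realType) (d : nat) (rho : 'M[R]_d) : Prop :=
  [/\ rho^T = rho,
      (forall v : 'cV[R]_d, 0 <= (v^T *m rho *m v) 0 0)
    & \tr rho = 1].

Definition orth_one_param_group (R : realType) (n : nat) (S : R -> 'M[R]_n) : Prop :=
  [/\ (forall t, orthogonal_mx (S t)),
      S 0 = 1%:M
    & (forall s t, S (s + t) = S s *m S t)].

Definition conj_map (R : realType) (n : nat) (S : 'M[R]_n) (X : 'M[R]_n) : 'M[R]_n :=
  S *m X *m S^T.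

From mathcomp Require Import all_boot all_order all_algebra.
From mathcomp Require Import mxtens.
From mathcomp Require Import reals.
Import Order.TTheory GRing.Theory Num.Theory.
Set Implicit Arguments. Unset Strict Implicit. Unset Printing Implicit Defensive.
Local Open Scope ring_scope.

(* Proof idea: since S_t is orthogonal, the invariance of rho (x) rho means that S_t commutes
   with every rho (x) rho.  Testing this against the tensor squares of the uniformly mixed and
   the uniform pure state on one or two basis vectors shows that any W commuting with all
   rho (x) rho vanishes off the entries (ij, ij) and (ij, ji), and that W_(ij,ji) = W_(ji,ij);
   so W is symmetric.  A symmetric orthogonal matrix squares to 1, and S_t = S_(t/2)^2. *)

Section Commutant.
Variables (R : idomainType) (n : nat).
Implicit Types (W : 'M[R]_n) (e r : 'rV[R]_n).

Lemma commute_diag_mx_eq0 W e p q :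
  W *m diag_mx e = diag_mx e *m W -> e 0 p != e 0 q -> W p q = 0.
Proof.
move=> /matrixP/(_ p q); rewrite mul_mx_diag mul_diag_mx !mxE => WeE epq.
have : (e 0 q - e 0 p) * W p q = 0 by rewrite mulrBl mulrC WeE subrr.
by move/eqP; rewrite mulf_eq0 subr_eq0 eq_sym (negbTE epq) => /eqP.
Qed.

Lemma commute_rank1_mx W r p q :
  W *m (r^T *m r) = (r^T *m r) *m W ->
  (W *m r^T) p 0 * r 0 q = r 0 p * (W^T *m r^T) q 0.
Proof.
move=> /matrixP/(_ p q); rewrite mulmxA -[_ *m W]mulmxA !mxE !big_ord1.
by rewrite -[r *m W]trmxK trmx_mul !mxE.
Qed.

End Commutant.

Section Densities.
Variables (R : realType) (n : nat).
Implicit Types A : {set 'I_n}.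

Lemma density_mx_gram m (Y : 'M[R]_(n, m)) (c : R) : 0 < c -> \tr (Y *m Y^T) = c ->
  density_mx (c^-1 *: (Y *m Y^T)).
Proof.
move=> c_gt0 trY; split.
- by rewrite linearZ /= trmx_mul trmxK.
- move=> v; rewrite -scalemxAr -scalemxAl mxE.
  apply: mulr_ge0; first by rewrite invr_ge0 ltW.
  have -> : v^T *m (Y *m Y^T) *m v = (Y^T *m v)^T *m (Y^T *m v).
    by rewrite trmx_mul trmxK !mulmxA.
  by rewrite mxE; apply: sumr_ge0 => i _; rewrite mxE -expr2 sqr_ge0.
- by rewrite mxtraceZ trY mulVf // gt_eqF.
Qed.

Definition indicator_row A : 'rV[R]_n := \row_i (i \in A)%:R.

Definition uniform_mixture_mx A : 'M[R]_n :=
  #|A|%:R^-1 *: diag_mx (indicator_row A).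

Definition uniform_pure_mx A : 'M[R]_n :=
  #|A|%:R^-1 *: ((indicator_row A)^T *m indicator_row A).

Lemma diag_indicatorE A i j :
  diag_mx (indicator_row A) i j = ((i \in A) && (i == j))%:R.
Proof. by rewrite !mxE; case: (i \in A); case: (i == j). Qed.

Lemma mul_indicatorE A i j :
  ((indicator_row A)^T *m indicator_row A) i j = ((i \in A) && (j \in A))%:R.
Proof. by rewrite !mxE big_ord1 !mxE -natrM mulnb. Qed.

Lemma uniform_mixture_mxE A i j :
  uniform_mixture_mx A i j = #|A|%:R^-1 * ((i \in A) && (i == j))%:R.
Proof. by rewrite mxE diag_indicatorE. Qed.

Lemma uniform_pure_mxE A i j :
  uniform_pure_mx A i j = #|A|%:R^-1 * ((i \in A) && (j \in A))%:R.
Proof. by rewrite mxE mul_indicatorE. Qed.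

Lemma sum_indicator A : \sum_i indicator_row A 0 i = #|A|%:R.
Proof.
rewrite -sum1_card natr_sum [RHS]big_mkcond /=.
by apply: eq_bigr => i _; rewrite mxE; case: (i \in A).
Qed.

Lemma density_uniform_mixture A : (0 < #|A|)%N -> density_mx (uniform_mixture_mx A).
Proof.
move=> A0; have DDT : diag_mx (indicator_row A) *m (diag_mx (indicator_row A))^T
    = diag_mx (indicator_row A).
  apply/matrixP=> i j; rewrite tr_diag_mx mul_diag_mx !mxE.
  by case: (i \in A); rewrite ?mul1r ?mul0r ?mul0rn.
rewrite /uniform_mixture_mx -[X in _ *: X]DDT; apply: density_mx_gram.
  by rewrite ltr0n.
by rewrite DDT mxtrace_diag sum_indicator.
Qed.

Lemma density_uniform_pure A : (0 < #|A|)%N -> density_mx (uniform_pure_mx A).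
Proof.
move=> A0; rewrite /uniform_pure_mx -{2}[indicator_row A]trmxK.
apply: density_mx_gram; first by rewrite ltr0n.
rewrite trmxK mxtrace_mulC /mxtrace big_ord1 mxE -sum_indicator.
by apply: eq_bigr => i _; rewrite !mxE; case: (i \in A); rewrite ?mulr1 ?mulr0.
Qed.

End Densities.

Arguments indicator_row {R n} A.
Arguments uniform_mixture_mx {R n} A.
Arguments uniform_pure_mx {R n} A.

Section Scaling.
Variables (R : fieldType) (n : nat).

Lemma commute_scale_mx (W M : 'M[R]_n) (c : R) : c != 0 ->
  W *m (c *: M) = (c *: M) *m W -> W *m M = M *m W.
Proof. by move=> c0; rewrite -scalemxAr -scalemxAl => /(scalerI c0). Qed.

End Scaling.

Section TensorSquares.
Variables (R : realType) (d : nat).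
Implicit Types (A : {set 'I_d}) (W : 'M[R]_(d * d)).

Local Notation idx i j := (@mxtens_index d d (i, j)).

Lemma mxtens_index_eq (i j k l : 'I_d) : (idx i j == idx k l) = (i == k) && (j == l).
Proof. by rewrite (inj_eq (can_inj (@mxtens_indexK d d))) xpair_eqE. Qed.

Definition pair_set A : {set 'I_(d * d)} := @mxtens_index d d @: setX A A.

Lemma mem_pair_set A i j : (idx i j \in pair_set A) = (i \in A) && (j \in A).
Proof. by rewrite mem_imset ?in_setX //; exact: can_inj (@mxtens_indexK d d). Qed.

Lemma tens_uniform_mixture A :
  uniform_mixture_mx A *t uniform_mixture_mx A
  = (#|A|%:R ^+ 2)^-1 *: diag_mx (indicator_row (pair_set A)) :> 'M[R]_(d * d).
Proof.
apply/matrixP=> p q; case: (mxtens_indexP p) => i j; case: (mxtens_indexP q) => k l.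
rewrite tensmxE !uniform_mixture_mxE [RHS]mxE diag_indicatorE.
by rewrite mem_pair_set mxtens_index_eq mulrACA -natrM mulnb andbACA -expr2 exprVn.
Qed.

Lemma tens_uniform_pure A :
  uniform_pure_mx A *t uniform_pure_mx A
  = (#|A|%:R ^+ 2)^-1 *: ((indicator_row (pair_set A))^T *m indicator_row (pair_set A))
  :> 'M[R]_(d * d).
Proof.
apply/matrixP=> p q; case: (mxtens_indexP p) => i j; case: (mxtens_indexP q) => k l.
rewrite tensmxE !uniform_pure_mxE [RHS]mxE mul_indicatorE.
by rewrite !mem_pair_set mulrACA -natrM mulnb andbACA -expr2 exprVn.
Qed.

Definition centralizes_tens_squares W :=
  forall rho : 'M[R]_d, density_mx rho -> W *m (rho *t rho) = (rho *t rho) *m W.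

Lemma centralizes_tens_squares_tr W :
  centralizes_tens_squares W -> centralizes_tens_squares W^T.
Proof.
move=> cW rho rho_dens; have rho2T : (rho *t rho)^T = rho *t rho.
  by rewrite trmx_tens; case: rho_dens => ->.
by rewrite -{1}rho2T -trmx_mul -cW // trmx_mul rho2T.
Qed.

Lemma centralizes_uniform_mixture W A : centralizes_tens_squares W -> (0 < #|A|)%N ->
  W *m diag_mx (indicator_row (pair_set A)) = diag_mx (indicator_row (pair_set A)) *m W.
Proof.
move=> cW A_gt0; apply: (commute_scale_mx (c := (#|A|%:R ^+ 2)^-1)).
  by rewrite invr_eq0 expf_neq0 // pnatr_eq0 -lt0n.
by rewrite -tens_uniform_mixture; apply/cW/density_uniform_mixture.
Qed.

Lemma centralizes_uniform_pure W A : centralizes_tens_squares W -> (0 < #|A|)%N ->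
  let r := indicator_row (pair_set A) in W *m (r^T *m r) = (r^T *m r) *m W.
Proof.
move=> cW A_gt0; apply: (commute_scale_mx (c := (#|A|%:R ^+ 2)^-1)).
  by rewrite invr_eq0 expf_neq0 // pnatr_eq0 -lt0n.
by rewrite -tens_uniform_pure; apply/cW/density_uniform_pure.
Qed.

Lemma centralizes_pair_set_eq0 W A p q : centralizes_tens_squares W -> (0 < #|A|)%N ->
  (p \in pair_set A) != (q \in pair_set A) -> W p q = 0.
Proof.
move=> cW A_gt0 pqA.
apply: commute_diag_mx_eq0 (centralizes_uniform_mixture cW A_gt0) _.
by rewrite !mxE eqr_nat; case: (p \in pair_set A) (q \in pair_set A) pqA => [] [].
Qed.

Lemma centralizes_tens_squares_support W i j k l : centralizes_tens_squares W ->
  ~~ ((k == i) && (l == j)) -> ~~ ((k == j) && (l == i)) -> W (idx i j) (idx k l) = 0.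
Proof.
move=> cW; have [<- | nij] := eqVneq i j => ne_ij ne_ji.
  apply: (centralizes_pair_set_eq0 (A := [set i]) cW _); first by rewrite cards1.
  by rewrite !mem_pair_set !in_set1 eqxx; case: (_ && _) ne_ij.
have [<- | nkl] := eqVneq k l.
  apply: (centralizes_pair_set_eq0 (A := [set k]) cW _); first by rewrite cards1.
  rewrite !mem_pair_set !in_set1 eqxx.
  by apply/negP => /eqP/andP[/eqP ik /eqP jk]; rewrite ik jk eqxx in nij.
apply: (centralizes_pair_set_eq0 (A := [set i; j]) cW _); first by rewrite cards2.
rewrite !mem_pair_set !in_set2 !eqxx orbT /=.
by apply/negP => /andP[/orP[]/eqP ek /orP[]/eqP el]; move: ne_ij ne_ji nkl; rewrite ek el ?eqxx.
Qed.

Lemma centralizes_mulmx_col W i j (x : 'cV[R]_(d * d)) : centralizes_tens_squares W ->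
  (W *m x) (idx i j) 0 = \sum_(s in [set idx i j; idx j i]) W (idx i j) s * x s 0.
Proof.
move=> cW; rewrite mxE [RHS]big_mkcond /=; apply: eq_bigr => s _.
case: (mxtens_indexP s) => k l; rewrite in_set2 !mxtens_index_eq.
by case: ifP => // /norP[ne_ij ne_ji]; rewrite centralizes_tens_squares_support ?mul0r.
Qed.

Lemma centralizes_tens_squares_swap W i j : centralizes_tens_squares W ->
  W (idx i j) (idx j i) = W (idx j i) (idx i j).
Proof.
move=> cW; have [-> // | nij] := eqVneq i j.
set A := [set i; j]; pose r : 'rV[R]_(d * d) := indicator_row (pair_set A).
have A_gt0 : (0 < #|A|)%N by rewrite cards2.
have r1 k l : k \in A -> l \in A -> r 0 (idx k l) = 1.
  by move=> kA lA; rewrite mxE mem_pair_set kA lA.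
have cr : W *m (r^T *m r) = (r^T *m r) *m W := centralizes_uniform_pure cW A_gt0.
have iA : i \in A by rewrite in_set2 eqxx.
have jA : j \in A by rewrite in_set2 eqxx orbT.
have cWT := centralizes_tens_squares_tr cW.
(* Both (W r^T)_ij and (W^T r^T)_ij equal W_(ii,ii); expanding them gives the claim. *)
have := commute_rank1_mx (idx i j) (idx i i) cr.
have := commute_rank1_mx (idx i i) (idx i j) cr.
rewrite !r1 // !mulr1 !mul1r !centralizes_mulmx_col //.
have ij_ji : idx i j \notin [set idx j i] by rewrite in_set1 mxtens_index_eq (negbTE nij).
rewrite setUid !big_setU1 //= !big_set1 ![r^T _ _]mxE !r1 // !mulr1 ![W^T _ _]mxE.
by move=> -> /addrI.
Qed.

Lemma centralizes_tens_squares_sym W : centralizes_tens_squares W -> W^T = W.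
Proof.
move=> cW; apply/matrixP => p q; rewrite mxE.
case: (mxtens_indexP p) => i j; case: (mxtens_indexP q) => k l.
have [/andP[/eqP-> /eqP->] // | ne_ij] := boolP ((k == i) && (l == j)).
have [/andP[/eqP-> /eqP->] | ne_ji] := boolP ((k == j) && (l == i)).
  by rewrite centralizes_tens_squares_swap.
rewrite !centralizes_tens_squares_support //.
  by rewrite eq_sym [j == _]eq_sym.
by rewrite andbC eq_sym [i == _]eq_sym.
Qed.

End TensorSquares.

Section OneParameterGroup.
Variable R : realType.

Lemma conj_map_fixed_commute n (U X : 'M[R]_n) :
  orthogonal_mx U -> conj_map U X = X -> U *m X = X *m U.
Proof. by move=> oU fixX; rewrite -{2}fixX /conj_map -!mulmxA (mulmx1C oU) mulmx1. Qed.

Lemma orthogonal_sym_sqr n (U : 'M[R]_n) : orthogonal_mx U -> U^T = U -> U *m U = 1%:M.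
Proof. by move=> oU UT; rewrite -{2}UT. Qed.

Lemma orth_one_param_group_half n (S : R -> 'M[R]_n) t :
  orth_one_param_group S -> S t = S (t / 2) *m S (t / 2).
Proof. by case=> _ _ Sadd; rewrite {1}(splitr t) Sadd. Qed.

End OneParameterGroup.

Theorem mainTheorem7 (R : realType) (d : nat) (hd : (1 <= d)%N)
  (S : R -> 'M[R]_(d * d)) :
  orth_one_param_group S ->
  (forall (t : R) (rho : 'M[R]_d), density_mx rho ->
     conj_map (S t) (rho *t rho) = rho *t rho) ->
  forall (t : R) (X : 'M[R]_(d * d)), conj_map (S t) X = X.
Proof.
move=> gS fixS t X; have [orthS _ _] := gS.
have cS : centralizes_tens_squares (S (t / 2)).
  by move=> rho /(fixS (t / 2)); apply: conj_map_fixed_commute (orthS _).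
have St1 : S t = 1%:M.
  rewrite (orth_one_param_group_half t gS) (orthogonal_sym_sqr (orthS _)) //.
  exact: centralizes_tens_squares_sym.
by rewrite /conj_map St1 mul1mx trmx1 mulmx1.
Qed.
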